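(* Let $\gamma>0$, $\Omega=(0,\pi)$, and let $\mathcal{W}$ be the generator of the weakly coupled thermoelastic system, acting on $\mathcal{H}=L^2(\Omega)^3$ by \[ \mathcal{W}\begin{pmatrix} w\\ v\\ \theta\end{pmatrix}=\begin{pmatrix} \partial_x v\\ \partial_x w-\gamma\theta\\ \gamma v+\partial_x^2\theta\end{pmatrix}, \] where $(w,v,\theta)=(\partial_x u,\partial_t u,\theta)$, with domain encoding any one of the following boundary conditions at $x=0,\pi$: (1) $u=0$ and $\theta=0$; (2) $u=0$ and $\partial_x\theta=0$; (3) $\partial_x u=0$ and $\theta=0$; (4) $\partial_x u=0$ and $\partial_x\theta=0$. Then, for each of these four boundary conditions, the spectrum of $\mathcal{W}$ asymptotically lies along the imaginary axis and the negative real axis: every eigenvalue $\lambda$ of $\mathcal{W}$ with sufficiently large $|\lambda|$ satisfies \[ \lambda\sim i n\qquad\text{or}\qquad \lambda\sim -n^{2} \] for some large integer $n$.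
   Context: This operator corresponds to the weakly coupled thermoelastic system $\partial_t^2u-\partial_x^2u+\gamma\theta=0$, $\partial_t\theta-\partial_x^2\theta-\gamma\partial_t u=0$ on $(0,\pi)\times(0,\infty)$. The spectrum of $\mathcal{W}$ consists of eigenvalues only ($\mathcal{W}^{-1}$ is compact). The notation $\lambda\sim \mu_n$ means that $\lambda$ is asymptotically equal to $\mu_n$ as $|\lambda|\to\infty$. *)

From Stdlib Require Import Reals.
From Coquelicot Require Import Coquelicot.

Open Scope R_scope.

(* The four boundary conditions at x = 0, pi:
   BC_DD : u = 0 and theta = 0
   BC_DN : u = 0 and d_x theta = 0
   BC_ND : d_x u = 0 and theta = 0
   BC_NN : d_x u = 0 and d_x theta = 0
   In the first-order variables (w, v, theta) = (u_x, u_t, theta),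
   "u = 0" becomes v = 0 and "d_x u = 0" becomes w = 0. *)
Inductive bc := BC_DD | BC_DN | BC_ND | BC_NN.

Definition u_dirichlet (b : bc) : bool :=
  match b with BC_DD | BC_DN => true | _ => false end.
Definition theta_dirichlet (b : bc) : bool :=
  match b with BC_DD | BC_ND => true | _ => false end.

Definition W_eigenvalue (gamma : R) (b : bc) (lam : C) : Prop :=
  exists (w v th w' v' th' th'' : R -> C),
    (forall x, 0 <= x <= PI ->
       is_derive w x (w' x) /\ is_derive v x (v' x) /\
       is_derive th x (th' x) /\ is_derive th' x (th'' x)) /\
    (forall x, 0 < x < PI ->
       v' x = (lam * w x)%C /\
       (w' x - RtoC gamma * th x)%C = (lam * v x)%C /\
       (RtoC gamma * v x + th'' x)%C = (lam * th x)%C) /\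
    (if u_dirichlet b then v 0 = 0%C /\ v PI = 0%C
     else w 0 = 0%C /\ w PI = 0%C) /\
    (if theta_dirichlet b then th 0 = 0%C /\ th PI = 0%C
     else th' 0 = 0%C /\ th' PI = 0%C) /\
    (exists x, 0 < x < PI /\ (w x <> 0%C \/ v x <> 0%C \/ th x <> 0%C)).

From Stdlib Require Import Reals Lra.
From Coquelicot Require Import Coquelicot.
Open Scope R_scope.

(* Pairing the eigenvalue equations with the conjugate unknowns gives three fluxes,
   Re (v conj w), Re (th' conj th) and Im (th' conj th), which vanish at 0 and PI
   under each of the four boundary conditions and whose x-derivatives are quadratic
   forms in (w, v, th, th').  A function with nonnegative derivative and equal end
   values has zero derivative, so no combination of these forms can be positive
   definite on an eigenfunction.  The sum of the first two gives the form
   Re lam (|w|^2 + |v|^2 + |th|^2) + |th'|^2, hence Re lam <= 0; the combination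
   +-Im (th' conj th) - Re (v conj w) is positive definite as soon as
   gamma^2 < 2 |Re lam| |Im lam|, hence 2 |Re lam| |Im lam| <= gamma^2.  Large
   eigenvalues therefore lie close to the imaginary axis or to the negative real
   axis, where rounding Im lam, resp. sqrt (- Re lam), down to an integer gives n. *)

(* [Cdot z u] and [Ccross z u] are the real and imaginary parts of [z * conj u]. *)
Definition Cdot (z u : C) : R := Re z * Re u + Im z * Im u.
Definition Ccross (z u : C) : R := Im z * Re u - Re z * Im u.

Lemma is_derive_Re (f : R -> C) x l :
  is_derive f x l -> is_derive (fun y => Re (f y)) x (Re l).
Proof.
  intros H.
  apply (filterdiff_ext_lin _ _ _
    (filterdiff_comp f (fun z : C => fst z) _ _ H (filterdiff_linear _ is_linear_fst))).
  reflexivity.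
Qed.

Lemma is_derive_Im (f : R -> C) x l :
  is_derive f x l -> is_derive (fun y => Im (f y)) x (Im l).
Proof.
  intros H.
  apply (filterdiff_ext_lin _ _ _
    (filterdiff_comp f (fun z : C => snd z) _ _ H (filterdiff_linear _ is_linear_snd))).
  reflexivity.
Qed.

Lemma is_derive_Rmult (f g : R -> R) x df dg :
  is_derive f x df -> is_derive g x dg ->
  is_derive (fun y => f y * g y) x (df * g x + f x * dg).
Proof. intros Hf Hg. exact (is_derive_mult f g x df dg Hf Hg Rmult_comm). Qed.

Lemma is_derive_Rplus (f g : R -> R) x df dg :
  is_derive f x df -> is_derive g x dg -> is_derive (fun y => f y + g y) x (df + dg).
Proof. exact (is_derive_plus f g x df dg). Qed.

Lemma is_derive_Rminus (f g : R -> R) x df dg :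
  is_derive f x df -> is_derive g x dg -> is_derive (fun y => f y - g y) x (df - dg).
Proof. exact (is_derive_minus f g x df dg). Qed.

Lemma is_derive_Cdot (f g : R -> C) x df dg :
  is_derive f x df -> is_derive g x dg ->
  is_derive (fun y => Cdot (f y) (g y)) x (Cdot df (g x) + Cdot (f x) dg).
Proof.
  intros Hf Hg.
  replace (Cdot df (g x) + Cdot (f x) dg)
    with ((Re df * Re (g x) + Re (f x) * Re dg) + (Im df * Im (g x) + Im (f x) * Im dg))
    by (unfold Cdot; ring).
  unfold Cdot; apply is_derive_Rplus; apply is_derive_Rmult;
    auto using is_derive_Re, is_derive_Im.
Qed.

Lemma is_derive_Ccross (f g : R -> C) x df dg :
  is_derive f x df -> is_derive g x dg ->
  is_derive (fun y => Ccross (f y) (g y)) x (Ccross df (g x) + Ccross (f x) dg).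
Proof.
  intros Hf Hg.
  replace (Ccross df (g x) + Ccross (f x) dg)
    with ((Im df * Re (g x) + Im (f x) * Re dg) - (Re df * Im (g x) + Re (f x) * Im dg))
    by (unfold Ccross; ring).
  unfold Ccross; apply is_derive_Rminus; apply is_derive_Rmult;
    auto using is_derive_Re, is_derive_Im.
Qed.

Lemma derive_eq0_of_nonneg_of_eq_ends (F dF : R -> R) (a b : R) :
  (forall x, a <= x <= b -> is_derive F x (dF x)) ->
  (forall x, a < x < b -> 0 <= dF x) -> F a = F b ->
  forall x, a < x < b -> dF x = 0.
Proof.
  intros HF Hpos Hab.
  assert (Hmono : forall x y, a <= x -> x < y -> y <= b -> F x <= F y).
  { intros x y Hx Hxy Hy.
    destruct (MVT_cor2 F dF x y Hxy) as (c & Hc & Hcin).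
    - intros c Hc. apply is_derive_Reals, HF. lra.
    - specialize (Hpos c ltac:(lra)). nra. }
  assert (Hconst : forall y, a < y < b -> F y = F a).
  { intros y Hy.
    pose proof (Hmono a y ltac:(lra) ltac:(lra) ltac:(lra)).
    pose proof (Hmono y b ltac:(lra) ltac:(lra) ltac:(lra)). lra. }
  intros x Hx.
  rewrite <- (is_derive_unique F x (dF x) (HF x ltac:(lra))).
  apply is_derive_unique.
  apply (is_derive_ext_loc (fun _ => F a)).
  - apply (locally_interval _ x a b); try (simpl; lra).
    intros y Hay Hyb. symmetry. apply Hconst. simpl in *. lra.
  - exact (is_derive_const (F a) x).
Qed.

Lemma Cdot_self_ge0 (z : C) : 0 <= Cdot z z.
Proof. unfold Cdot. nra. Qed.

Lemma Cdot_self_eq0 (z : C) : Cdot z z = 0 -> z = 0%C.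
Proof.
  destruct z as [z1 z2]. unfold Cdot, Re, Im. simpl. intros H.
  assert (z1 = 0) by nra. assert (z2 = 0) by nra. subst. reflexivity.
Qed.

Lemma Cdot_self_gt0 (z : C) : z <> 0%C -> 0 < Cdot z z.
Proof.
  intros Hz. destruct (Cdot_self_ge0 z) as [H | H]; [exact H |].
  exfalso. apply Hz, Cdot_self_eq0. auto.
Qed.

Definition dissipation_form (a : R) (w v th s : C) : R :=
  a * (Cdot w w + Cdot v v + Cdot th th) + Cdot s s.

Lemma dissipation_form_ge0 (a : R) (w v th s : C) :
  0 <= a -> 0 <= dissipation_form a w v th s.
Proof.
  intros Ha. unfold dissipation_form.
  pose proof (Cdot_self_ge0 w). pose proof (Cdot_self_ge0 v).
  pose proof (Cdot_self_ge0 th). pose proof (Cdot_self_ge0 s). nra.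
Qed.

Lemma dissipation_form_gt0 (a : R) (w v th s : C) :
  0 < a -> (w <> 0%C \/ v <> 0%C \/ th <> 0%C) -> 0 < dissipation_form a w v th s.
Proof.
  intros Ha Hnz. unfold dissipation_form.
  pose proof (Cdot_self_ge0 w). pose proof (Cdot_self_ge0 v).
  pose proof (Cdot_self_ge0 th). pose proof (Cdot_self_ge0 s).
  assert (0 < Cdot w w + Cdot v v + Cdot th th)
    by (destruct Hnz as [Hz | [Hz | Hz]]; apply Cdot_self_gt0 in Hz; lra).
  nra.
Qed.

Definition coupling_form (al be g sg : R) (w v th : C) : R :=
  al * (Cdot w w + Cdot v v) + be * Cdot th th - g * (Cdot v th + sg * Ccross v th).

Section CouplingForm.

Variables (al be g sg : R).
Hypotheses (al_gt0 : 0 < al) (g_small : g ^ 2 < 2 * al * be)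
  (sg_sign : sg ^ 2 = 1).

(* [sg ^ 2 = 1] turns the two squares in [th] into [2 * Cdot th th]. *)
Lemma coupling_form_square (v th : C) :
  al * coupling_form al be g sg 0 v th =
  (al * Re v - g / 2 * (Re th - sg * Im th)) ^ 2
  + (al * Im v - g / 2 * (Im th + sg * Re th)) ^ 2
  + (al * be - g ^ 2 / 2) * Cdot th th.
Proof.
  replace (al * be - g ^ 2 / 2) with (al * be - g ^ 2 / 4 * (1 + sg ^ 2))
    by (rewrite sg_sign; field).
  unfold coupling_form, Cdot, Ccross, Re, Im. simpl. field.
Qed.

Lemma coupling_form_vth_ge0 (v th : C) : 0 <= coupling_form al be g sg 0 v th.
Proof.
  apply (Rmult_le_reg_l al); [exact al_gt0 |].
  rewrite Rmult_0_r, coupling_form_square.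
  pose proof (pow2_ge_0 (al * Re v - g / 2 * (Re th - sg * Im th))).
  pose proof (pow2_ge_0 (al * Im v - g / 2 * (Im th + sg * Re th))).
  pose proof (Cdot_self_ge0 th). nra.
Qed.

Lemma coupling_form_vth_gt0 (v th : C) :
  (v <> 0%C \/ th <> 0%C) -> 0 < coupling_form al be g sg 0 v th.
Proof.
  intros Hvth. destruct (Cdot_self_ge0 th) as [Hth | Hth].
  - apply (Rmult_lt_reg_l al); [exact al_gt0 |].
    rewrite Rmult_0_r, coupling_form_square.
    pose proof (pow2_ge_0 (al * Re v - g / 2 * (Re th - sg * Im th))).
    pose proof (pow2_ge_0 (al * Im v - g / 2 * (Im th + sg * Re th))). nra.
  - symmetry in Hth. apply Cdot_self_eq0 in Hth. subst th.
    destruct Hvth as [Hv | Hth]; [| now contradiction Hth].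
    replace (coupling_form al be g sg 0 v 0) with (al * Cdot v v)
      by (unfold coupling_form, Cdot, Ccross, Re, Im; simpl; ring).
    apply Rmult_lt_0_compat; [exact al_gt0 | now apply Cdot_self_gt0].
Qed.

Lemma coupling_form_split (w v th : C) :
  coupling_form al be g sg w v th = al * Cdot w w + coupling_form al be g sg 0 v th.
Proof. unfold coupling_form, Cdot, Re, Im. simpl. ring. Qed.

Lemma coupling_form_ge0 (w v th : C) : 0 <= coupling_form al be g sg w v th.
Proof.
  rewrite coupling_form_split.
  pose proof (Cdot_self_ge0 w). pose proof (coupling_form_vth_ge0 v th). nra.
Qed.

Lemma coupling_form_gt0 (w v th : C) :
  (w <> 0%C \/ v <> 0%C \/ th <> 0%C) -> 0 < coupling_form al be g sg w v th.
Proof.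
  intros Hnz. rewrite coupling_form_split.
  pose proof (Cdot_self_ge0 w). pose proof (coupling_form_vth_ge0 v th).
  destruct Hnz as [Hw | Hvth].
  - apply Cdot_self_gt0 in Hw. nra.
  - pose proof (coupling_form_vth_gt0 v th Hvth). nra.
Qed.

End CouplingForm.

Section EnergyIdentities.

Variables (gamma : R) (lam : C) (w v th w' v' th' th'' : R -> C).

Hypothesis derivs : forall x, 0 <= x <= PI ->
  is_derive w x (w' x) /\ is_derive v x (v' x) /\
  is_derive th x (th' x) /\ is_derive th' x (th'' x).
Hypothesis eigen_eqs : forall x, 0 < x < PI ->
  v' x = (lam * w x)%C /\
  (w' x - RtoC gamma * th x)%C = (lam * v x)%C /\
  (RtoC gamma * v x + th'' x)%C = (lam * th x)%C.
Hypothesis mech_ends : (v 0 = 0%C /\ v PI = 0%C) \/ (w 0 = 0%C /\ w PI = 0%C).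
Hypothesis heat_ends : (th 0 = 0%C /\ th PI = 0%C) \/ (th' 0 = 0%C /\ th' PI = 0%C).
Variable x0 : R.
Hypothesis x0_in : 0 < x0 < PI.
Hypothesis nonzero_at_x0 : w x0 <> 0%C \/ v x0 <> 0%C \/ th x0 <> 0%C.

Let mech_flux x := Cdot (v x) (w x).
Let heat_flux x := Cdot (th' x) (th x).
Let heat_cross x := Ccross (th' x) (th x).
Let dmech x := Cdot (v' x) (w x) + Cdot (v x) (w' x).
Let dheat x := Cdot (th'' x) (th x) + Cdot (th' x) (th' x).
Let dcross x := Ccross (th'' x) (th x) + Ccross (th' x) (th' x).

Lemma mech_flux_derive x : 0 <= x <= PI -> is_derive mech_flux x (dmech x).
Proof.
  intros Hx. destruct (derivs x Hx) as (Dw & Dv & _). now apply is_derive_Cdot.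
Qed.

Lemma heat_flux_derive x : 0 <= x <= PI -> is_derive heat_flux x (dheat x).
Proof.
  intros Hx. destruct (derivs x Hx) as (_ & _ & Dth & Dth'). now apply is_derive_Cdot.
Qed.

Lemma heat_cross_derive x : 0 <= x <= PI -> is_derive heat_cross x (dcross x).
Proof.
  intros Hx. destruct (derivs x Hx) as (_ & _ & Dth & Dth'). now apply is_derive_Ccross.
Qed.

Lemma eigen_eqs_solved x : 0 < x < PI ->
  v' x = (lam * w x)%C /\ w' x = (lam * v x + RtoC gamma * th x)%C /\
  th'' x = (lam * th x - RtoC gamma * v x)%C.
Proof.
  intros Hx. destruct (eigen_eqs x Hx) as (E1 & E2 & E3).
  repeat split; [exact E1 | rewrite <- E2 | rewrite <- E3]; ring.
Qed.

Lemma dmech_eq x : 0 < x < PI ->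
  dmech x = Re lam * (Cdot (w x) (w x) + Cdot (v x) (v x)) + gamma * Cdot (v x) (th x).
Proof.
  intros Hx. destruct (eigen_eqs_solved x Hx) as (E1 & E2 & _).
  unfold dmech. rewrite E1, E2. unfold Cdot, Re, Im. simpl. ring.
Qed.

Lemma dheat_eq x : 0 < x < PI ->
  dheat x = Re lam * Cdot (th x) (th x) - gamma * Cdot (v x) (th x)
            + Cdot (th' x) (th' x).
Proof.
  intros Hx. destruct (eigen_eqs_solved x Hx) as (_ & _ & E3).
  unfold dheat. rewrite E3. unfold Cdot, Re, Im. simpl. ring.
Qed.

Lemma dcross_eq x : 0 < x < PI ->
  dcross x = Im lam * Cdot (th x) (th x) - gamma * Ccross (v x) (th x).
Proof.
  intros Hx. destruct (eigen_eqs_solved x Hx) as (_ & _ & E3).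
  unfold dcross. rewrite E3. unfold Cdot, Ccross, Re, Im. simpl. ring.
Qed.

Lemma fluxes_vanish_at_ends :
  mech_flux 0 = 0 /\ mech_flux PI = 0 /\ heat_flux 0 = 0 /\ heat_flux PI = 0 /\
  heat_cross 0 = 0 /\ heat_cross PI = 0.
Proof.
  unfold mech_flux, heat_flux, heat_cross, Cdot, Ccross.
  destruct mech_ends as [[-> ->] | [-> ->]], heat_ends as [[-> ->] | [-> ->]];
    simpl; repeat split; ring.
Qed.

Lemma eigenvalue_Re_nonpos : Re lam <= 0.
Proof.
  apply Rnot_lt_le. intros Hpos.
  destruct fluxes_vanish_at_ends as (M0 & MPI & H0 & HPI & _).
  assert (HF : forall x, 0 <= x <= PI ->
            is_derive (fun y => mech_flux y + heat_flux y) x (dmech x + dheat x))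
    by (intros; apply is_derive_Rplus; auto using mech_flux_derive, heat_flux_derive).
  assert (Hform : forall x, 0 < x < PI ->
            dmech x + dheat x = dissipation_form (Re lam) (w x) (v x) (th x) (th' x))
    by (intros; rewrite dmech_eq, dheat_eq by assumption;
        unfold dissipation_form; ring).
  assert (Hzero : dmech x0 + dheat x0 = 0).
  { apply (derive_eq0_of_nonneg_of_eq_ends _ _ 0 PI HF); [| cbv beta; lra | exact x0_in].
    intros x Hx. rewrite Hform by exact Hx. apply dissipation_form_ge0. lra. }
  rewrite Hform in Hzero by exact x0_in.
  pose proof (dissipation_form_gt0 _ _ _ _ (th' x0) Hpos nonzero_at_x0). lra.
Qed.

Lemma eigenvalue_not_beyond_hyperbola (sg : R) :
  sg ^ 2 = 1 -> 0 < sg * Im lam -> gamma ^ 2 < 2 * (- Re lam) * (sg * Im lam) -> False.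
Proof.
  intros Hsg Hb Hg.
  assert (Ha : 0 < - Re lam) by (pose proof (pow2_ge_0 gamma); nra).
  destruct fluxes_vanish_at_ends as (M0 & MPI & _ & _ & C0 & CPI).
  assert (HF : forall x, 0 <= x <= PI ->
            is_derive (fun y => sg * heat_cross y - mech_flux y) x (sg * dcross x - dmech x))
    by (intros; apply is_derive_Rminus;
        [apply is_derive_scal, heat_cross_derive | apply mech_flux_derive]; assumption).
  assert (Hform : forall x, 0 < x < PI -> sg * dcross x - dmech x =
            coupling_form (- Re lam) (sg * Im lam) gamma sg (w x) (v x) (th x))
    by (intros; rewrite dmech_eq, dcross_eq by assumption; unfold coupling_form; ring).
  assert (Hzero : sg * dcross x0 - dmech x0 = 0).
  { apply (derive_eq0_of_nonneg_of_eq_ends _ _ 0 PI HF); [| | exact x0_in].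
    - intros x Hx. rewrite Hform by exact Hx. now apply coupling_form_ge0.
    - cbv beta. rewrite M0, MPI, C0, CPI. reflexivity. }
  rewrite Hform in Hzero by exact x0_in.
  pose proof (coupling_form_gt0 _ _ _ _ Ha Hg Hsg _ _ _ nonzero_at_x0). lra.
Qed.

Lemma eigenvalue_hyperbola : 2 * Rabs (Re lam) * Rabs (Im lam) <= gamma ^ 2.
Proof.
  apply Rnot_lt_le. intros Hgt.
  pose proof eigenvalue_Re_nonpos as Ha. rewrite (Rabs_left1 (Re lam) Ha) in Hgt.
  pose proof (pow2_ge_0 gamma).
  destruct (Rlt_le_dec 0 (Im lam)) as [Hb | Hb].
  - rewrite Rabs_pos_eq in Hgt by lra.
    apply (eigenvalue_not_beyond_hyperbola 1); [ring | lra | lra].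
  - rewrite Rabs_left1 in Hgt by exact Hb.
    apply (eigenvalue_not_beyond_hyperbola (-1)); [ring | nra | lra].
Qed.

End EnergyIdentities.

Lemma W_eigenvalue_localization (gamma : R) (b : bc) (lam : C) :
  W_eigenvalue gamma b lam ->
  Re lam <= 0 /\ 2 * Rabs (Re lam) * Rabs (Im lam) <= gamma ^ 2.
Proof.
  intros (w & v & th & w' & v' & th' & th'' & Hder & Heq & Hu & Ht & x0 & Hx0 & Hnz).
  assert (Hmech : (v 0 = 0%C /\ v PI = 0%C) \/ (w 0 = 0%C /\ w PI = 0%C))
    by (destruct (u_dirichlet b); auto).
  assert (Hheat : (th 0 = 0%C /\ th PI = 0%C) \/ (th' 0 = 0%C /\ th' PI = 0%C))
    by (destruct (theta_dirichlet b); auto).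
  split.
  - exact (eigenvalue_Re_nonpos gamma lam w v th w' v' th' th''
             Hder Heq Hmech Hheat x0 Hx0 Hnz).
  - exact (eigenvalue_hyperbola gamma lam w v th w' v' th' th''
             Hder Heq Hmech Hheat x0 Hx0 Hnz).
Qed.

Lemma Cmod_le_abs_Re_Im (z : C) : Cmod z <= Rabs (Re z) + Rabs (Im z).
Proof.
  replace z with (RtoC (Re z) + Ci * RtoC (Im z))%C at 1
    by (destruct z; unfold Ci, RtoC, Cplus, Cmult, Re, Im; simpl; f_equal; ring).
  eapply Rle_trans; [apply Cmod_triangle |].
  rewrite Cmod_mult, Cmod_Ci, !Cmod_R. lra.
Qed.

Lemma near_imaginary_integer (eps : R) (z : C) :
  0 < eps -> Rabs (Re z) <= 1 -> 2 / eps + 1 <= Rabs (Im z) ->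
  exists n : Z, Cmod (z - Ci * RtoC (IZR n)) <= eps * Rabs (IZR n).
Proof.
  intros Heps HRe HIm.
  exists (Int_part (Im z)).
  destruct (base_Int_part (Im z)) as [Hlo Hhi].
  set (n := IZR (Int_part (Im z))) in *.
  eapply Rle_trans; [apply Cmod_le_abs_Re_Im |].
  replace (Re (z - Ci * RtoC n)) with (Re z) by (unfold Re, Im; simpl; ring).
  replace (Im (z - Ci * RtoC n)) with (Im z - n) by (unfold Re, Im; simpl; ring).
  assert (Hn : 2 / eps <= Rabs n)
    by (revert HIm; unfold Rabs; repeat destruct Rcase_abs; lra).
  assert (eps * (2 / eps) = 2) by (field; lra).
  assert (Rabs (Im z - n) <= 1) by (unfold Rabs; destruct Rcase_abs; lra).
  nra.
Qed.

Lemma near_negative_square (eps : R) (z : C) :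
  0 < eps -> Rabs (Im z) <= 1 -> (4 / eps + 2) ^ 2 <= - Re z ->
  exists n : Z, Cmod (z + RtoC (IZR n ^ 2)) <= eps * IZR n ^ 2.
Proof.
  intros Heps HIm HRe.
  assert (Hk : 0 < 4 / eps) by (apply Rdiv_lt_0_compat; lra).
  set (s := sqrt (- Re z)).
  assert (Hss : s * s = - Re z) by (apply sqrt_sqrt; nra).
  assert (Hs : 4 / eps + 2 <= s).
  { rewrite <- (sqrt_pow2 (4 / eps + 2)) by lra. now apply sqrt_le_1_alt. }
  exists (Int_part s).
  destruct (base_Int_part s) as [Hlo Hhi].
  set (n := IZR (Int_part s)) in *.
  eapply Rle_trans; [apply Cmod_le_abs_Re_Im |].
  replace (Re (z + RtoC (n ^ 2))) with (Re z + n ^ 2) by (unfold Re; simpl; ring).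
  replace (Im (z + RtoC (n ^ 2))) with (Im z) by (unfold Im; simpl; ring).
  assert (Hsq : Rabs (Re z + n ^ 2) <= 2 * n + 1) by (rewrite Rabs_left1; nra).
  assert (eps * (4 / eps) = 4) by (field; lra).
  nra.
Qed.

Theorem theorem4p3 (gamma : R) (hgamma : 0 < gamma) (b : bc) :
  forall eps : R, 0 < eps ->
  exists R0 : R, forall lam : C,
    W_eigenvalue gamma b lam -> R0 < Cmod lam ->
    exists n : Z,
      Cmod (lam - Ci * RtoC (IZR n))%C <= eps * Rabs (IZR n) \/
      Cmod (lam + RtoC (IZR n ^ 2))%C <= eps * (IZR n ^ 2).
Proof.
  intros eps Heps.
  assert (Hk : 0 < 2 / eps) by (apply Rdiv_lt_0_compat; lra).
  pose proof (pow2_ge_0 (4 / eps + 2)). pose proof (pow2_ge_0 gamma).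
  set (M := 2 / eps + 1 + (4 / eps + 2) ^ 2 + gamma ^ 2).
  assert (HM : 2 / eps + 1 <= M /\ (4 / eps + 2) ^ 2 <= M /\ gamma ^ 2 <= M)
    by (unfold M; lra).
  exists (2 * M). intros lam Heig Hbig.
  destruct (W_eigenvalue_localization gamma b lam Heig) as [HRe Hhyp].
  pose proof (Cmod_le_abs_Re_Im lam).
  pose proof (Rabs_pos (Re lam)). pose proof (Rabs_pos (Im lam)).
  destruct (Rle_lt_dec (Rabs (Re lam)) (Rabs (Im lam))) as [Hcase | Hcase].
  - assert (HIm : M < Rabs (Im lam)) by lra.
    destruct (near_imaginary_integer eps lam) as [n Hn]; [lra | nra | lra |].
    exists n. now left.
  - assert (HRe' : M < Rabs (Re lam)) by lra.
    rewrite Rabs_left1 in HRe', Hhyp by exact HRe.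
    destruct (near_negative_square eps lam) as [n Hn]; [lra | nra | lra |].
    exists n. now right.
Qed.
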